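(* Let $G$ be a graph, $e=uv$ an edge, and $w$ a vertex such that $w$ is an isolated vertex of $G-N_G[\{u,v\}]$ (in particular $w\notin N_G[\{u,v\}]$). If $w$ has a neighbour $x$ with $\deg_G(x)=2$, then $\operatorname{reg}(G)=\operatorname{reg}(G-e)$, where $G-e$ is obtained by deleting the edge $e$.
   Context: $N_G[\{u,v\}]=N_G(u)\cup N_G(v)\cup\{u,v\}$. $\operatorname{reg}(G)=\max\{j\ge0:\widetilde H_{j-1}(\operatorname{Ind}(G[S]);\Bbbk)\neq0\text{ for some }S\subseteq V(G)\}$ over a field $\Bbbk$, $\operatorname{Ind}$ the independence complex. *)

From HB Require Import structures.
From mathcomp Require Import all_boot all_order all_algebra.
Set Implicit Arguments. Unset Strict Implicit. Unset Printing Implicit Defensive.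
Import GRing.Theory.
Local Open Scope ring_scope.

(* A simple graph on a finite vertex type T is a symmetric irreflexive relation. *)

Section Defs.
Variables (F : fieldType) (T : finType).

Definition closedNbhEdge (E : rel T) (u v : T) : {set T} :=
  [set y | [|| y == u, y == v, E u y | E v y]].

Definition delEdge (E : rel T) (u v : T) : rel T :=
  fun a b => E a b && ~~ (((a == u) && (b == v)) || ((a == v) && (b == u))).

Definition degree (E : rel T) (x : T) : nat := #|[set y | E x y]|.

Definition indFace (E : rel T) (S : {set T}) (s : {set T}) : bool :=
  (s \subset S) && [forall x in s, forall y in s, ~~ E x y].

(* faces with j vertices (i.e. of dimension j-1), including the empty face *)
Definition faces (P : pred {set T}) (j : nat) : {set {set T}} :=
  [set s | P s & #|s| == j]%N.

Definition bsign (s : {set T}) (x : T) : F :=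
  (-1) ^+ #|[set y in s | (enum_rank y < enum_rank x)%N]|.

(* boundary matrix from chains on faces of size j.+1 to faces of size j
   (row-vector convention); for j = 0 this is the augmentation map. *)
Definition bdmx (P : pred {set T}) (j : nat) :
  'M[F]_(#|faces P j.+1|, #|faces P j|) :=
  \matrix_(i, k)
    (let s : {set T} := enum_val i in let t : {set T} := enum_val k in
     \sum_(x in s | s :\ x == t) bsign s x).

(* dimension of the reduced homology group H~_{j-1} of the simplicial complex P *)
Definition redHomDim (P : pred {set T}) (j : nat) : nat :=
  (#|faces P j| - (if j is j'.+1 then \rank (bdmx P j') else 0) - \rank (bdmx P j))%N.

Definition reg (E : rel T) : nat :=
  \max_(S : {set T}) \max_(j < #|T|.+2 | redHomDim (indFace E S) j != 0%N) (j : nat).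

End Defs.

From HB Require Import structures.
From mathcomp Require Import all_boot all_order all_algebra.
From Stdlib Require Import Classical.

(* Reduced homology is handled through explicit chains: [redHomDim_neq0P] shows that
   H~_{j-1}(K) <> 0 exactly when K carries a j-chain that is a cycle but not a boundary,
   so each of the two inequalities between the regularities amounts to transporting such
   a cycle, keeping its size j, from an induced independence complex of one graph to one
   of the other.

   Deleting e = uv adds to Ind(G[S]) the join of the edge {u,v} with the link
   Ind(G[S \ N[{u,v}]]); likewise Ind(G[S + a]) is Ind(G[S]) with a cone over
   Ind(G[S \ N(a)]) glued on. By Mayer-Vietoris, a nonbounding cycle on one side of such
   a union either survives on the other side or yields a nonbounding cycle of the link.
   A link containing w is a cone with apex w, hence acyclic. Otherwise the link cycle is
   suspended over the edge wx: neither w nor x (whose only neighbours are w and one of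
   u, v) sees the link, and on the resulting vertex set G and G - e coincide. *)

Unset Printing Implicit Defensive.
Import GRing.Theory.
Local Open Scope ring_scope.

Section Chains.
Variable F : fieldType.
Context {T : finType}.

(** * Chains of the full simplex on T *)

Local Notation chain := {ffun {set T} -> F}.
Implicit Types (a b x : T) (s t A R S : {set T}) (c l m q z : chain) (P Q : {set T} -> Prop).

Definition bdry c : chain :=
  [ffun t : {set T} => \sum_(x | x \notin t) c (x |: t) * bsign F (x |: t) x].

Definition cone a l : chain :=
  [ffun t : {set T} => if a \in t then l (t :\ a) * bsign F t a else 0].

Definition uncone a c : chain :=
  [ffun t : {set T} => if a \in t then 0 else c (a |: t) * bsign F (a |: t) a].

Definition avoid a c : chain := [ffun t : {set T} => if a \in t then 0 else c t].

Definition avoids a c := forall t, a \in t -> c t = 0.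

Definition supported c P := forall s, c s != 0 -> P s.

Lemma bdry_is_zmod_morphism : zmod_morphism bdry.
Proof.
move=> c1 c2; apply/ffunP => t; rewrite !ffunE -sumrB.
by apply: eq_bigr => x _; rewrite !ffunE mulrBl.
Qed.
HB.instance Definition _ :=
  GRing.isZmodMorphism.Build chain chain bdry bdry_is_zmod_morphism.

Lemma cone_is_zmod_morphism a : zmod_morphism (cone a).
Proof. by move=> l m; apply/ffunP => t; rewrite !ffunE; case: ifP; rewrite ?subr0 ?mulrBl. Qed.
HB.instance Definition _ a :=
  GRing.isZmodMorphism.Build chain chain (cone a) (cone_is_zmod_morphism a).

Lemma uncone_is_zmod_morphism a : zmod_morphism (uncone a).
Proof. by move=> c1 c2; apply/ffunP => t; rewrite !ffunE; case: ifP; rewrite ?subr0 ?mulrBl. Qed.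
HB.instance Definition _ a :=
  GRing.isZmodMorphism.Build chain chain (uncone a) (uncone_is_zmod_morphism a).

Lemma avoid_is_zmod_morphism a : zmod_morphism (avoid a).
Proof. by move=> c1 c2; apply/ffunP => t; rewrite !ffunE; case: ifP; rewrite ?subr0. Qed.
HB.instance Definition _ a :=
  GRing.isZmodMorphism.Build chain chain (avoid a) (avoid_is_zmod_morphism a).

Lemma bsign_sqr s x : bsign F s x * bsign F s x = 1.
Proof. by rewrite -expr2 sqrr_sign. Qed.

Lemma bsignU1 {y s} x : y \notin s ->
  bsign F (y |: s) x = (-1) ^+ (enum_rank y < enum_rank x)%N * bsign F s x.
Proof.
move=> ys; rewrite /bsign -exprD; congr (_ ^+ _).
have [yx|yx] := boolP (enum_rank y < enum_rank x)%N.
  have -> : [set t in y |: s | (enum_rank t < enum_rank x)%N] =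
            y |: [set t in s | (enum_rank t < enum_rank x)%N].
    by apply/setP => t; rewrite !inE; case: eqP => // ->; rewrite yx.
  by rewrite cardsU1 inE (negbTE ys).
rewrite add0n; apply: eq_card => t; rewrite !inE.
by case: eqP => // ->; rewrite (negbTE yx) (negbTE ys).
Qed.

(* Removing [a] and inserting [x] in the two possible orders gives opposite signs. *)
Lemma bsign_exchange {t a x} : a \in t -> x \notin t ->
  bsign F (x |: t) a * bsign F (x |: t) x = - (bsign F t a * bsign F (x |: (t :\ a)) x).
Proof.
move=> at' xt; have xa : x != a by apply: contraNneq xt => ->.
have ax : a \notin x |: (t :\ a) by rewrite !inE eqxx eq_sym (negbTE xa).
have sgn : (-1) ^+ (enum_rank x < enum_rank a)%N * (-1) ^+ (enum_rank a < enum_rank x)%N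
           = - 1 :> F.
  have : enum_rank x != enum_rank a by apply: contra xa => /eqP /enum_rank_inj ->.
  by rewrite -val_eqE /=; case: ltngtP; rewrite ?expr1 ?expr0 ?mulr1 ?mul1r.
rewrite (bsignU1 a xt) -{2}(setD1K at') setUCA (bsignU1 x ax).
by rewrite mulrACA sgn mulN1r.
Qed.

Lemma bdryE c t : bdry c t = \sum_(x | x \notin t) c (x |: t) * bsign F (x |: t) x.
Proof. exact: ffunE. Qed.

Lemma coneE a l t : cone a l t = if a \in t then l (t :\ a) * bsign F t a else 0.
Proof. exact: ffunE. Qed.

Lemma bdry_coefE c t :
  bdry c t = \sum_s c s * \sum_(x in s | s :\ x == t) bsign F s x.
Proof.
rewrite bdryE; under [RHS]eq_bigr do rewrite big_distrr /=.
rewrite (exchange_big_dep predT) //= [LHS]big_mkcond; apply: eq_bigr => x _.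
rewrite (big_mkcond (fun s : {set T} => (x \in s) && (s :\ x == t))) /=.
rewrite (bigD1 (x |: t)) //= big1 ?addr0.
  rewrite setU11 /=; have [xt | xt] := boolP (x \in t).
    by apply/esym/ifN/negP => /eqP xtDx; move: xt; rewrite -xtDx setD11.
  by rewrite setU1K ?eqxx.
move=> s /negbTE sx; case: ifP => // /andP [xs /eqP st].
by move: sx; rewrite -st setD1K ?eqxx.
Qed.

Lemma avoids_avoid a c : avoids a (avoid a c).
Proof. by move=> t at'; rewrite ffunE at'. Qed.

Lemma avoids_uncone a c : avoids a (uncone a c).
Proof. by move=> t at'; rewrite ffunE at'. Qed.

Lemma avoids_bdry {a c} : avoids a c -> avoids a (bdry c).
Proof. by move=> ac t at'; rewrite bdryE big1 // => x _; rewrite ac ?mul0r // setU1r. Qed.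

Lemma avoids_cone {a b l} : b != a -> avoids b l -> avoids b (cone a l).
Proof. by move=> ba bl t bt; rewrite coneE; case: ifP => // _; rewrite bl ?mul0r // !inE ba. Qed.

Lemma avoid_id {a c} : avoids a c -> avoid a c = c.
Proof. by move=> ac; apply/ffunP => t; rewrite ffunE; case: ifP => // /ac ->. Qed.

Lemma avoid_cone a l : avoid a (cone a l) = 0.
Proof. by apply/ffunP => t; rewrite !ffunE; case: ifP => // ->. Qed.

Lemma uncone_avoids {a c} : avoids a c -> uncone a c = 0.
Proof.
by move=> ac; apply/ffunP => t; rewrite !ffunE; case: ifP => // _; rewrite ac ?setU11 ?mul0r.
Qed.

Lemma uncone_cone {a l} : avoids a l -> uncone a (cone a l) = l.
Proof.
move=> al; apply/ffunP => t; rewrite !ffunE setU11.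
by case: ifP => [/al -> // | at']; rewrite setU1K ?at' // -mulrA bsign_sqr mulr1.
Qed.

Lemma chain_vertex_decomp a c : c = avoid a c + cone a (uncone a c).
Proof.
apply/ffunP => t; rewrite !ffunE; case: ifP => at'; last by rewrite addr0.
by rewrite add0r setD11 setD1K // -mulrA bsign_sqr mulr1.
Qed.

Lemma bdry_cone {a l} : avoids a l -> bdry (cone a l) = l - cone a (bdry l).
Proof.
move=> al; apply/ffunP => t; rewrite bdryE !ffunE.
have [at' | at'] := boolP (a \in t); last first.
  rewrite subr0 (bigD1 a) //= big1 ?addr0.
    by rewrite coneE setU11 setU1K // -mulrA bsign_sqr mulr1.
  move=> x /andP [xt xa]; rewrite coneE !inE eq_sym (negbTE xa) /=.
  by rewrite (negbTE at') mul0r.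
rewrite al // sub0r big_distrl -sumrN /=.
rewrite [RHS](bigD1 a) ?setD11 //= setD1K // al // !mul0r oppr0 add0r.
apply: eq_big => [x | x xt].
  by rewrite !inE negb_and negbK; case: eqP => [-> | _] /=; rewrite ?at' ?andbT.
have xa : x != a by apply: contraNneq xt => ->.
have xtDa : (x |: t) :\ a = x |: (t :\ a).
  by apply/setP => y; rewrite !inE; case: (y =P x) => [-> | ] /=; rewrite ?xa ?andbT.
rewrite coneE setU1r // xtDa -mulrA bsign_exchange //.
by rewrite mulrN [bsign F t a * _]mulrC mulrA.
Qed.

Lemma avoid_bdry a c : avoid a (bdry c) = bdry (avoid a c) + uncone a c.
Proof.
have ap := avoids_avoid a c; have aq := avoids_uncone a c.
rewrite {1}(chain_vertex_decomp a c) raddfD /= (bdry_cone aq) raddfD raddfB /= avoid_cone.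
by rewrite (avoid_id (avoids_bdry ap)) (avoid_id aq) subr0.
Qed.

Lemma uncone_bdry a c : uncone a (bdry c) = - bdry (uncone a c).
Proof.
have ap := avoids_avoid a c; have aq := avoids_uncone a c.
rewrite {1}(chain_vertex_decomp a c) raddfD /= (bdry_cone aq) raddfD raddfB /=.
rewrite (uncone_avoids (avoids_bdry ap)) (uncone_avoids aq) (uncone_cone (avoids_bdry aq)).
by rewrite add0r sub0r.
Qed.

Lemma cone2_bdry {a b m} : a != b -> avoids a m -> avoids b m ->
  cone a (cone b (bdry m)) = bdry (cone a (cone b m)) + (cone a m - cone b m).
Proof.
move=> ab am bm; rewrite (bdry_cone (avoids_cone ab am)) (bdry_cone bm) !raddfB /=.
by rewrite opprK addrC addrA subrK addNKr.
Qed.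

Lemma supported_sub {c P Q} : supported c P -> (forall s, P s -> Q s) -> supported c Q.
Proof. by move=> cP PQ s /cP /PQ. Qed.

Lemma supported0 P : supported 0 P.
Proof. by move=> s; rewrite ffunE eqxx. Qed.

Lemma supported_eq0 {c P} : supported c P -> (forall s, ~ P s) -> c = 0.
Proof. by move=> cP nP; apply/ffunP => s; rewrite ffunE; apply/eqP/negP => /negP/cP/nP. Qed.

Lemma supportedD {c1 c2 P} : supported c1 P -> supported c2 P -> supported (c1 + c2) P.
Proof.
move=> c1P c2P s; rewrite ffunE; case: (eqVneq (c1 s) 0) => [-> | /c1P //].
by rewrite add0r => /c2P.
Qed.

Lemma supportedN {c P} : supported c P -> supported (- c) P.
Proof. by move=> cP s; rewrite ffunE oppr_eq0 => /cP. Qed.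

Lemma supportedB {c1 c2 P} : supported c1 P -> supported c2 P -> supported (c1 - c2) P.
Proof. by move=> c1P /supportedN; apply: supportedD. Qed.

Lemma supported_avoids a {c P} : supported c P -> (forall s, P s -> a \notin s) -> avoids a c.
Proof. by move=> cP Pa t at'; apply/eqP; apply: contraT => /cP /Pa; rewrite at'. Qed.

Lemma supported_cone {a m P Q} : supported m P ->
  (forall s, P s -> a \notin s -> Q (a |: s)) -> supported (cone a m) Q.
Proof.
move=> mP PQ t; rewrite coneE; case: ifP => [at' | _]; last by rewrite eqxx.
move=> nz; have /mP : m (t :\ a) != 0 by apply: contraNneq nz => ->; rewrite mul0r.
by move/PQ; rewrite setD11 setD1K //; apply.
Qed.

Lemma supported_uncone a {c P} :
  supported c P -> supported (uncone a c) (fun s => a \notin s /\ P (a |: s)).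
Proof.
move=> cP t; rewrite ffunE; case: ifP => [_ | /negbT at']; first by rewrite eqxx.
by move=> nz; split => //; apply: cP; apply: contraNneq nz => ->; rewrite mul0r.
Qed.

Lemma supported_avoid a {c P} :
  supported c P -> supported (avoid a c) (fun s => a \notin s /\ P s).
Proof. by move=> cP t; rewrite ffunE; case: ifP => [_ | /negbT at' /cP]; rewrite ?eqxx. Qed.

Lemma supported_bdry {c P Q} : supported c P ->
  (forall x t, x \notin t -> P (x |: t) -> Q t) -> supported (bdry c) Q.
Proof.
move=> cP PQ t nz; have /existsP [x /andP [xt cx]] :
    [exists x, (x \notin t) && (c (x |: t) != 0)].
  apply: contraNT nz => /existsPn cx; rewrite bdryE big1 // => x xt.
  by move: (cx x); rewrite xt /= negbK => /eqP ->; rewrite mul0r.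
exact: PQ xt (cP _ cx).
Qed.

Lemma bdry_bdry c : bdry (bdry c) = 0.
Proof.
have [n] := ubnP #|[set: T]|.
have : supported c (fun s => s \subset [set: T]) by move=> s _; apply: subsetT.
elim: n [set: T] c => // n IH A c cA ltAn.
have [A0 | [a aA]] := set_0Vmem A.
  suff -> : bdry c = 0 by rewrite raddf0.
  apply/ffunP => t; rewrite bdryE ffunE big1 // => x _.
  have [-> | /cA] := eqVneq (c (x |: t)) 0; first by rewrite mul0r.
  by rewrite A0 subset0 => /eqP /setP /(_ x); rewrite !inE eqxx.
have ltA'n : (#|A :\ a| < n)%N by rewrite (cardsD1 a A) aA in ltAn.
have IH' d Q : supported d Q -> (forall s, Q s -> s \subset A :\ a) -> bdry (bdry d) = 0.
  by move=> dQ QA; apply: (IH (A :\ a)) => // s /dQ /QA.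
have avA s : a \notin s -> s \subset A -> s \subset A :\ a.
  by move=> as' sA; rewrite subsetD1 sA as'.
have aq := avoids_uncone a c.
rewrite (chain_vertex_decomp a c) !raddfD /= (bdry_cone aq) raddfB /=.
rewrite (bdry_cone (avoids_bdry aq)) (IH' _ _ (supported_uncone a cA)).
  rewrite (IH' _ _ (supported_avoid a cA)) ?raddf0 ?oppr0 ?addr0 ?subrr ?add0r //.
  by move=> s [as' sA]; apply: avA.
by move=> s [as' asA]; apply: avA => //; apply: subset_trans asA; apply: subsetUr.
Qed.

(** * Cycles, boundaries and reduced homology *)

Implicit Types (K : pred {set T}) (k : nat).

Definition chain_on K k c := supported c (fun s => s \in faces K k).

Definition is_boundary K k z := exists2 c, chain_on K k.+1 c & bdry c = z.

Definition nonbounding_cycle K k z :=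
  [/\ chain_on K k z, bdry z = 0 & ~ is_boundary K k z].

Section ComplexHomology.
Variable K : pred {set T}.
Hypothesis K_down : forall s t, t \subset s -> K s -> K t.

Definition chain_of_row k (y : 'rV[F]_#|faces K k|) : chain :=
  [ffun t : {set T} => \sum_i ((enum_val i == t)%:R * y 0 i)].

Definition row_of_chain k c : 'rV[F]_#|faces K k| := \row_i c (enum_val i).

Lemma chain_of_rowK k : cancel (chain_of_row k) (row_of_chain k).
Proof.
move=> y; apply/rowP => i; rewrite mxE ffunE (bigD1 i) //= eqxx mul1r big1 ?addr0 //.
by move=> j /negbTE ji; rewrite (inj_eq enum_val_inj) ji mul0r.
Qed.

Lemma chain_on_chain_of_row k y : chain_on K k (chain_of_row k y).
Proof.
move=> t; rewrite ffunE; apply: contraR => tK; rewrite big1 // => i _.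
case: eqP => [ti | _]; last by rewrite mul0r.
by rewrite -ti enum_valP in tK.
Qed.

Lemma row_of_chainK {k c} : chain_on K k c -> chain_of_row k (row_of_chain k c) = c.
Proof.
move=> cK; apply/ffunP => t; rewrite ffunE.
have [tK | tK] := boolP (t \in faces K k).
  rewrite (bigD1 (enum_rank_in tK t)) //= mxE enum_rankK_in // eqxx mul1r.
  rewrite big1 ?addr0 // => i ti; case: eqP => [it | _]; last by rewrite mul0r.
  by case/eqP: ti; apply: enum_val_inj; rewrite enum_rankK_in.
have -> : c t = 0 by apply/eqP; apply: contraR tK => /cK.
rewrite big1 // => i _; case: eqP => [ti | _]; last by rewrite mul0r.
by rewrite -ti enum_valP in tK.
Qed.

Lemma chain_of_row0 k : chain_of_row k 0 = 0.
Proof. by apply/ffunP => t; rewrite !ffunE big1 // => i _; rewrite mxE mulr0. Qed.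

Lemma bdry_chain_on k c : chain_on K k.+1 c -> chain_on K k (bdry c).
Proof.
move=> cK; apply: (supported_bdry cK) => x t xt; rewrite !inE cardsU1 xt add1n eqSS.
by case/andP => /(K_down _ _ (subsetUr _ _)) ->.
Qed.

Lemma row_of_chain_bdry k y :
  row_of_chain k (bdry (chain_of_row k.+1 y)) = y *m bdmx F K k.
Proof.
apply/rowP => j; rewrite !mxE bdry_coefE.
under eq_bigr do rewrite ffunE big_distrl /=.
rewrite exchange_big /=; apply: eq_bigr => i _; rewrite mxE /=.
rewrite (bigD1 (enum_val i)) //= eqxx mul1r [X in _ + X]big1 ?addr0 //.
by move=> s si; rewrite eq_sym (negbTE si) !mul0r.
Qed.

Lemma chain_of_row_inj k : injective (chain_of_row k).
Proof. exact: can_inj (chain_of_rowK k). Qed.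

Lemma bdry_chain_of_row k y :
  bdry (chain_of_row k.+1 y) = chain_of_row k (y *m bdmx F K k).
Proof.
rewrite -row_of_chain_bdry row_of_chainK //.
exact/bdry_chain_on/chain_on_chain_of_row.
Qed.

Lemma bdmx_mulmx k : bdmx F K k.+1 *m bdmx F K k = 0.
Proof.
apply/row_matrixP => i; rewrite row_mul row0; apply: (@chain_of_row_inj k).
by rewrite -bdry_chain_of_row rowE -bdry_chain_of_row bdry_bdry chain_of_row0.
Qed.

Lemma is_boundaryP {k z} : chain_on K k z ->
  is_boundary K k z <-> (row_of_chain k z <= bdmx F K k)%MS.
Proof.
move=> zK; split => [[c cK <-] | /submxP [y zy]].
  by rewrite -(row_of_chainK cK) row_of_chain_bdry submxMl.
exists (chain_of_row k.+1 y); first exact: chain_on_chain_of_row.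
by rewrite bdry_chain_of_row -zy row_of_chainK.
Qed.

(* For k = 0 there is no boundary map out of the empty face: every 0-chain is a cycle. *)
Definition cycle_mx k : 'M[F]_#|faces K k| :=
  if k is k'.+1 then kermx (bdmx F K k') else 1%:M.

Lemma redHomDimE k : redHomDim F K k = (\rank (cycle_mx k) - \rank (bdmx F K k))%N.
Proof. by case: k => [|k]; rewrite /redHomDim ?mxrank1 ?subn0 // mxrank_ker. Qed.

Lemma bdmx_sub_cycle_mx k : (bdmx F K k <= cycle_mx k)%MS.
Proof. by case: k => [|k]; [apply: submx1 | apply/sub_kermxP; apply: bdmx_mulmx]. Qed.

Lemma cycle_mxP {k z} : chain_on K k z ->
  bdry z = 0 <-> (row_of_chain k z <= cycle_mx k)%MS.
Proof.
case: k z => [|k] z zK /=.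
  split => _; first exact: submx1.
  have /supported_eq0 : supported (bdry z) (fun _ => False).
    by apply: (supported_bdry zK) => x s xs; rewrite inE cardsU1 xs andbF.
  by apply => s [].
rewrite -{1}(row_of_chainK zK) bdry_chain_of_row -(chain_of_row0 k).
by split => [/chain_of_row_inj/sub_kermxP // | /sub_kermxP ->].
Qed.

Lemma redHomDim_neq0P k :
  redHomDim F K k != 0%N <-> exists z, nonbounding_cycle K k z.
Proof.
rewrite redHomDimE subn_eq0 (geq_leqif (mxrank_leqif_sup (bdmx_sub_cycle_mx k))).
split => [/row_subPn [i ni] | [z [zK bz nb]]].
  have zK := chain_on_chain_of_row k (row i (cycle_mx k)).
  exists (chain_of_row k (row i (cycle_mx k))); split => //.
    by apply/(cycle_mxP zK); rewrite chain_of_rowK row_sub.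
  by move/(is_boundaryP zK); rewrite chain_of_rowK; apply/negP.
apply/negP => cycB; apply: nb; apply/(is_boundaryP zK).
exact: submx_trans (proj1 (cycle_mxP zK) bz) cycB.
Qed.

End ComplexHomology.

Lemma nonbounding_cycle_eq K1 K2 k z :
  K1 =1 K2 -> nonbounding_cycle K1 k z -> nonbounding_cycle K2 k z.
Proof.
move=> K12; have facesE j : faces K1 j = faces K2 j by apply/setP => s; rewrite !inE K12.
by rewrite /nonbounding_cycle /is_boundary /chain_on !facesE.
Qed.

Lemma is_boundary_cone_apex {K k l} w : chain_on K k l -> bdry l = 0 ->
  (forall s, K s -> w \notin s -> K (w |: s)) -> is_boundary K k l.
Proof.
move=> lK bl Kw; set p := avoid w l; set q := uncone w l.
have el : l = p + cone w q := chain_vertex_decomp w l.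
have wp : avoids w p := avoids_avoid w l.
have bpq : bdry p = - q by apply/eqP; rewrite -addr_eq0 -avoid_bdry bl raddf0.
exists (cone w p); last by rewrite (bdry_cone wp) bpq raddfN opprK -el.
apply: (supported_cone (supported_avoid w lK)) => s [ws sK] _.
by move: sK; rewrite !inE cardsU1 ws add1n eqSS => /andP [/Kw/(_ ws) -> ->].
Qed.

(** * Independence complexes *)

Definition independent (H : rel T) s := [forall x in s, forall y in s, ~~ H x y].

Section IndependenceComplex.
Context {H : rel T} (Hsym : symmetric H) (Hirr : irreflexive H).

Lemma independentP s :
  reflect (forall x y, x \in s -> y \in s -> ~~ H x y) (independent H s).
Proof.
apply: (iffP forall_inP) => [ind x y xs ys | ind x xs].
  by move/forall_inP: (ind x xs); apply.
by apply/forall_inP => y; apply: ind.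
Qed.

Lemma indFaceE S s : indFace H S s = (s \subset S) && independent H s.
Proof. by []. Qed.

Lemma mem_ind_faces S k s :
  (s \in faces (indFace H S) k) = [&& s \subset S, independent H s & #|s| == k].
Proof. by rewrite inE /indFace -andbA. Qed.

Lemma indFace_down S s t : t \subset s -> indFace H S s -> indFace H S t.
Proof.
move=> ts /andP [sS /independentP ind]; rewrite /indFace (subset_trans ts sS).
by apply/independentP => x y xt yt; apply: ind; apply: (subsetP ts).
Qed.

Lemma ind_faces_sub {S k s} : s \in faces (indFace H S) k -> s \subset S.
Proof. by rewrite mem_ind_faces => /and3P []. Qed.

Lemma ind_faces_restrict {S R k s} :
  s \in faces (indFace H S) k -> s \subset R -> s \in faces (indFace H R) k.
Proof. by rewrite !mem_ind_faces => /and3P [_ -> ->] ->. Qed.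

Lemma ind_facesS {S R k s} :
  S \subset R -> s \in faces (indFace H S) k -> s \in faces (indFace H R) k.
Proof.
by move=> SR sF; rewrite (ind_faces_restrict sF) // (subset_trans (ind_faces_sub sF) SR).
Qed.

Lemma ind_faces_avoid {S k s} a :
  a \notin s -> s \in faces (indFace H S) k -> s \in faces (indFace H (S :\ a)) k.
Proof.
by move=> as' sF; apply: (ind_faces_restrict sF); rewrite subsetD1 (ind_faces_sub sF).
Qed.

Lemma indFace_setU1 {S s a} : indFace H S s -> a \in S ->
  (forall y, y \in s -> ~~ H a y) -> indFace H S (a |: s).
Proof.
move=> /andP [sS /independentP ind] aS sa; apply/andP; split.
  by rewrite subUset sub1set aS.
apply/independentP => x y; rewrite !inE.
case/predU1P => [-> | xs]; case/predU1P => [-> | ys]; rewrite ?Hirr ?sa //.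
  by rewrite Hsym sa.
exact: ind.
Qed.

Lemma ind_faces_setU1 {S k s a} : s \in faces (indFace H S) k -> a \in S -> a \notin s ->
  (forall y, y \in s -> ~~ H a y) -> a |: s \in faces (indFace H S) k.+1.
Proof.
move=> sF aS as' sa; move: sF; rewrite !inE cardsU1 as' add1n eqSS => /andP [sK ->].
by rewrite indFace_setU1.
Qed.

Lemma ind_faces_setU1_inv {S k s a} : a |: s \in faces (indFace H S) k.+1 -> a \notin s ->
  [/\ s \in faces (indFace H S) k, a \in S & forall y, y \in s -> ~~ H a y].
Proof.
rewrite !mem_ind_faces cardsU1 => /and3P [/subsetP asS /independentP ind] + as'.
rewrite as' add1n eqSS => ->; split.
- rewrite andbT; apply/andP; split.
    by apply/subsetP => y ys; apply: asS; rewrite setU1r.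
  by apply/independentP => x y xs ys; apply: ind; rewrite setU1r.
- by apply: asS; rewrite setU11.
- by move=> y ys; apply: ind; rewrite ?setU11 ?setU1r.
Qed.

Lemma ind_faces_link {S k s a} : a |: s \in faces (indFace H S) k.+1 -> a \notin s ->
  s \in faces (indFace H (S :\ a :\: [set y | H a y])) k.
Proof.
move=> asF as'; have [sF _ sa] := ind_faces_setU1_inv asF as'.
apply: (ind_faces_restrict sF); apply/subsetP => y ys; rewrite !inE sa //=.
rewrite (subsetP (ind_faces_sub sF)) // andbT; by apply: contraNneq as' => <-.
Qed.

Lemma isolated_no_nonbounding_cycle {R w k z} : w \in R ->
  (forall y, y \in R -> ~~ H w y) -> ~ nonbounding_cycle (indFace H R) k z.
Proof.
move=> wR wiso [zK bz []]; apply: (is_boundary_cone_apex w zK bz) => s sK _.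
have /andP [/subsetP sR _] := sK.
by apply: (indFace_setU1 sK wR) => y /sR; apply: wiso.
Qed.

Lemma nonbounding_cycle_setU1Vlink {R k z a} : a \notin R ->
  nonbounding_cycle (indFace H R) k z ->
  nonbounding_cycle (indFace H (a |: R)) k z \/
  exists q, nonbounding_cycle (indFace H (R :\: [set y | H a y])) k q.
Proof.
move=> aR [zK bz nb]; have aRa : (a |: R) :\ a = R := setU1K aR.
have [[c cK bc] | nbU] := classic (is_boundary (indFace H (a |: R)) k z); last first.
  left; split => //; apply: (supported_sub zK) => s sF.
  exact: ind_facesS (subsetUr _ _) sF.
right; exists (uncone a c).
have za : avoids a z.
  by apply: (supported_avoids a zK) => s /ind_faces_sub /subsetP sR; apply: contra aR => /sR.
have bq : bdry (uncone a c) = 0.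
  by apply/eqP; rewrite -oppr_eq0 -uncone_bdry bc uncone_avoids.
have ez : z = bdry (avoid a c) + uncone a c.
  by rewrite -avoid_bdry bc avoid_id.
split => //.
  move=> s /(supported_uncone a cK) [as' asF].
  by rewrite -aRa; apply: ind_faces_link asF as'.
move=> [m mL bm]; apply: nb; exists (avoid a c + m); last by rewrite raddfD /= bm ez.
apply: supportedD.
  by move=> s /(supported_avoid a cK) [as' sF]; rewrite -aRa; apply: ind_faces_avoid.
by apply: (supported_sub mL) => s sF; exact: ind_facesS (subsetDl _ _) sF.
Qed.

Lemma nonbounding_cycle_setD1Vlink {S j z a} : a \in S ->
  nonbounding_cycle (indFace H S) j z ->
  (exists z', nonbounding_cycle (indFace H (S :\ a)) j z') \/
  exists k q, j = k.+1 /\ nonbounding_cycle (indFace H (S :\ a :\: [set y | H a y])) k q.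
Proof.
move=> aS [zK bz nb]; set L := S :\ a :\: [set y | H a y].
set p := avoid a z; set q := uncone a z.
have LS : L \subset S by apply: subset_trans (subsetDl _ _) (subsetDl _ _).
have aL : a \notin L by rewrite !inE eqxx andbF.
have bpq : bdry p = - q by apply/eqP; rewrite -addr_eq0 -avoid_bdry bz raddf0.
have qL : supported q (fun s => s \in faces (indFace H L) #|s| /\ j = #|s|.+1).
  move=> s /(supported_uncone a zK) [as' asF].
  have js : j = #|s|.+1 by move: asF; rewrite inE cardsU1 as' => /andP [_ /eqP <-].
  by rewrite js in asF; split => //; apply: ind_faces_link asF as'.
have [[m mL bm] | nm] := classic (exists2 m, chain_on (indFace H L) j m & bdry m = q).
  have am : avoids a m.
    by apply: (supported_avoids a mL) => s /ind_faces_sub /subsetP sL; apply: contra aL => /sL.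
  left; exists (p + m); split.
  - apply: supportedD.
      by move=> s /(supported_avoid a zK) [as' sF]; apply: ind_faces_avoid.
    by apply: (supported_sub mL) => s sF; exact: ind_facesS (subsetDl _ _) sF.
  - by rewrite raddfD /= bpq bm addNr.
  move=> [c cK bc]; apply: nb; exists (c - cone a m).
    apply: supportedB.
      by apply: (supported_sub cK) => s sF; exact: ind_facesS (subsetDl _ _) sF.
    apply: (supported_cone mL) => s sF as'.
    apply: (ind_faces_setU1 (ind_facesS LS sF)) => // y /(subsetP (ind_faces_sub sF)).
    by rewrite !inE => /andP [].
  rewrite raddfB /= bc (bdry_cone am) bm [RHS](chain_vertex_decomp a z).
  by rewrite opprB addrCA addrK addrC.
right; case: j {zK nb} qL nm => [|k] qL nm.
  case: nm; exists 0; first exact: supported0.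
  by rewrite raddf0 (supported_eq0 qL) // => s [].
exists k, q; split => //; split => //.
  by move=> s /qL [sF [->]].
by apply/eqP; rewrite -oppr_eq0 -uncone_bdry bz raddf0.
Qed.

Lemma nonbounding_cycle_suspension {R k q a b} :
  nonbounding_cycle (indFace H R) k q -> a \notin R -> b \notin R -> a != b -> H a b ->
  (forall y, y \in R -> ~~ H a y) -> (forall y, y \in R -> ~~ H b y) ->
  nonbounding_cycle (indFace H (a |: (b |: R))) k.+1 (cone a q - cone b q).
Proof.
move=> [qK bq nb] aR bR ab Hab aiso biso.
have avoidsR x : x \notin R -> avoids x q.
  move=> xR; apply: (supported_avoids x qK) => s /ind_faces_sub /subsetP sR.
  by apply: contra xR => /sR.
have qa := avoidsR a aR; have qb := avoidsR b bR.
have RS : R \subset a |: (b |: R) by apply: subset_trans (subsetUr _ _) (subsetUr _ _).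
have coneK x : x \in a |: (b |: R) -> (forall y, y \in R -> ~~ H x y) ->
    chain_on (indFace H (a |: (b |: R))) k.+1 (cone x q).
  move=> xS xiso; apply: (supported_cone qK) => s sF xs.
  apply: (ind_faces_setU1 (ind_facesS RS sF)) => // y /(subsetP (ind_faces_sub sF)).
  exact: xiso.
split.
- by apply: supportedB; apply: coneK; rewrite // !inE eqxx ?orbT.
- by rewrite raddfB /= !bdry_cone // bq (raddf0 (cone a)) (raddf0 (cone b)) subrr.
move=> [c cK bc]; apply: nb; exists (- uncone a c).
  apply: supportedN => s /(supported_uncone a cK) [as' asF].
  have [sF _ sa] := ind_faces_setU1_inv asF as'.
  apply: (ind_faces_restrict sF); apply/subsetP => y ys.
  move: (subsetP (ind_faces_sub sF) y ys); rewrite !inE.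
  case/or3P => [/eqP ya | /eqP yb | //]; first by rewrite -ya ys in as'.
  by move: (sa y ys); rewrite yb Hab.
rewrite raddfN /= -uncone_bdry bc raddfB /= (uncone_cone qa).
by rewrite (uncone_avoids (avoids_cone ab qa)) subr0.
Qed.

End IndependenceComplex.

Lemma ind_faces_subrel (H H' : rel T) S k s : subrel H' H ->
  s \in faces (indFace H S) k -> s \in faces (indFace H' S) k.
Proof.
move=> H'H; rewrite !mem_ind_faces => /and3P [-> /independentP ind ->].
by rewrite andbT; apply/independentP => x y xs ys; apply: contra (ind x y xs ys); apply: H'H.
Qed.

Lemma leq_reg (E1 E2 : rel T) :
  (forall S j z, nonbounding_cycle (indFace E1 S) j z ->
     exists R z', nonbounding_cycle (indFace E2 R) j z') ->
  (reg F E1 <= reg F E2)%N.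
Proof.
move=> E12; apply/bigmax_leqP => S _; apply/bigmax_leqP => j hj.
have [z /E12 [R [z' hz']]] := (redHomDim_neq0P _ (@indFace_down E1 S) j).1 hj.
have hR := (redHomDim_neq0P _ (@indFace_down E2 R) j).2 (ex_intro _ z' hz').
exact: leq_trans (leq_bigmax_cond j hR) (leq_bigmax R).
Qed.

(** * Deleting an edge *)

Lemma degree2_nbrs (E : rel T) x w a : degree E x = 2%N -> E x w -> E x a -> w != a ->
  [set y | E x y] = [set w; a].
Proof.
move=> dx xw xa wa; apply/esym/eqP; rewrite eqEcard cards2 wa -/(degree E x) dx andbT.
by apply/subsetP => y; rewrite !inE => /orP [] /eqP ->.
Qed.

Lemma nbrs2_notin {E : rel T} {x w a R} : [set y | E x y] = [set w; a] ->
  w \notin R -> a \notin R -> forall y, y \in R -> ~~ E x y.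
Proof.
move=> xnbrs wR aR y yR; apply/negP => xy; have : y \in [set y | E x y] by rewrite inE.
by rewrite xnbrs !inE => /orP [] /eqP yx; rewrite -yx yR in wR aR.
Qed.

Section EdgeDeletion.
Context {E : rel T} {u v : T}.
Hypotheses (Esym : symmetric E) (Eirr : irreflexive E) (Euv : E u v).
Local Notation E' := (delEdge E u v).
Local Notation N := (closedNbhEdge E u v).

Lemma neq_uv : u != v.
Proof. by apply: contraTneq Euv => ->; rewrite Eirr. Qed.

Lemma delEdge_sym : symmetric E'.
Proof.
move=> x y; rewrite /delEdge Esym; congr (_ && ~~ _).
by rewrite orbC; congr (_ || _); rewrite andbC.
Qed.

Lemma delEdge_irr : irreflexive E'.
Proof. by move=> x; rewrite /delEdge Eirr. Qed.

Lemma delEdge_sub : subrel E' E.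
Proof. by move=> x y /andP []. Qed.

Lemma delEdgeE x y : ~~ ((x == u) && (y == v) || (x == v) && (y == u)) -> E' x y = E x y.
Proof. by move=> xy; rewrite /delEdge xy andbT. Qed.

Lemma notin_closedNbhEdge {y} : y \notin N -> [/\ y != u, y != v, ~~ E u y & ~~ E v y].
Proof. by rewrite inE !negb_or => /and4P. Qed.

Lemma independent_delEdge s : ~~ ((u \in s) && (v \in s)) ->
  independent E' s = independent E s.
Proof.
move=> uvs; apply/independentP/independentP => ind x y xs ys; last first.
  by apply: contra (ind x y xs ys); apply: delEdge_sub.
rewrite -delEdgeE ?ind //; apply: contra uvs.
by case/orP => /andP [/eqP <- /eqP <-]; rewrite xs ys.
Qed.

Lemma nonbounding_cycle_delEdgeE {R k z} : ~~ ((u \in R) && (v \in R)) ->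
  nonbounding_cycle (indFace E' R) k z <-> nonbounding_cycle (indFace E R) k z.
Proof.
move=> uvR; have EE' : indFace E' R =1 indFace E R.
  move=> s; rewrite !indFaceE; have [sR | //] := boolP (s \subset R).
  rewrite independent_delEdge //; apply: contra uvR => /andP [us vs].
  by rewrite (subsetP sR _ us) (subsetP sR _ vs).
by split; apply: nonbounding_cycle_eq => s; rewrite EE'.
Qed.

Lemma ind_faces_delEdge S k s : s \in faces (indFace E' S) k ->
  ~~ ((u \in s) && (v \in s)) -> s \in faces (indFace E S) k.
Proof. by move=> sF uvs; move: sF; rewrite !mem_ind_faces independent_delEdge. Qed.

Definition uv_part c := uncone v (uncone u c).

Lemma cone_uv_partE c t :
  cone u (cone v (uv_part c)) t = if (u \in t) && (v \in t) then c t else 0.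
Proof.
rewrite coneE; have [ut | //] := boolP (u \in t).
have vt' : (v \in t :\ u) = (v \in t) by rewrite !inE eq_sym neq_uv.
rewrite coneE vt'; have [vt | //] := boolP (v \in t); last by rewrite mul0r.
have vtu : v \in t :\ u by rewrite vt'.
rewrite /uv_part ffunE setD11 /= (setD1K vtu) ffunE setD11 /= (setD1K ut).
by rewrite -!mulrA (mulrA (bsign F (t :\ u) v)) bsign_sqr mul1r bsign_sqr mulr1.
Qed.

Lemma uv_part_bdry c : uv_part (bdry c) = bdry (uv_part c).
Proof. by rewrite /uv_part uncone_bdry raddfN /= uncone_bdry opprK. Qed.

Lemma uv_part_ind {S k z} : chain_on (indFace E S) k z -> uv_part z = 0.
Proof.
move=> zK; apply: (supported_eq0 (supported_uncone v (supported_uncone u zK))).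
move=> s [_ [_]]; rewrite mem_ind_faces => /and3P [_ /independentP ind _].
by move: (ind u v); rewrite Euv !inE !eqxx orbT => /(_ isT isT).
Qed.

Lemma chain_on_delEdge_uv_free {S n c} : chain_on (indFace E' S) n c ->
  chain_on (indFace E S) n (c - cone u (cone v (uv_part c))).
Proof.
move=> cK t; set d := cone u (cone v (uv_part c)).
have -> : (c - d) t = c t - d t by rewrite !ffunE.
rewrite /d cone_uv_partE; case: ifP => [_ | uvt]; first by rewrite subrr eqxx.
by rewrite subr0 => /cK tF; apply: ind_faces_delEdge tF _; rewrite uvt.
Qed.

Lemma uv_part_supported {S n c} : chain_on (indFace E' S) n c ->
  supported (uv_part c) (fun s => s \in faces (indFace E (S :\: N)) #|s| /\ n = #|s|.+2).
Proof.
move=> cK s /(supported_uncone v (supported_uncone u cK)) [vs [uvs usF]].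
have us : u \notin s by apply: contra uvs; apply: setU1r.
have ns : n = #|s|.+2 by move: usF; rewrite inE !cardsU1 uvs vs => /andP [_ /eqP <-].
rewrite ns in usF; split => //.
have /ind_faces_delEdge sF := ind_faces_link (ind_faces_link usF uvs) vs.
apply: ind_facesS (sF _); last by rewrite (negbTE us).
apply/subsetP => y; rewrite !inE => /and5P [nvy yv nuy yu yS].
rewrite delEdgeE in nvy; last by rewrite (negbTE yu) eq_sym (negbTE neq_uv) !andbF.
rewrite delEdgeE in nuy; last by rewrite (negbTE yv) (negbTE neq_uv) !andbF.
by rewrite (negbTE yu) (negbTE yv) (negbTE nuy) (negbTE nvy) yS.
Qed.

Lemma avoids_uv_link {S k m} : chain_on (indFace E (S :\: N)) k m -> avoids u m /\ avoids v m.
Proof.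
move=> mK; split; apply: (supported_avoids _ mK) => s /ind_faces_sub /subsetP sSN;
  by apply/negP => /sSN; rewrite inE inE eqxx ?orbT.
Qed.

Lemma chain_on_cone_uv {S k m} : u \in S -> v \in S -> chain_on (indFace E (S :\: N)) k m ->
  chain_on (indFace E S) k.+1 (cone u m - cone v m).
Proof.
move=> uS vS mK; have coneK a : a \in S -> a \in [set u; v] ->
    chain_on (indFace E S) k.+1 (cone a m).
  move=> aS auv; apply: (supported_cone mK) => s sF as'.
  apply: (ind_faces_setU1 Esym Eirr (ind_facesS (subsetDl _ _) sF) aS as') => y.
  move/(subsetP (ind_faces_sub sF)); rewrite inE => /andP [/notin_closedNbhEdge [_ _ ? ?] _].
  by case/set2P: auv => ->.
by apply: supportedB; apply: coneK; rewrite // !inE eqxx ?orbT.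
Qed.

Lemma chain_on_cone2_uv {S k m} : u \in S -> v \in S -> chain_on (indFace E (S :\: N)) k m ->
  chain_on (indFace E' S) k.+2 (cone u (cone v m)).
Proof.
move=> uS vS mK.
have vmK : supported (cone v m)
    (fun t => exists2 s, s \in faces (indFace E (S :\: N)) k & t = v |: s).
  by apply: (supported_cone mK) => s sF _; exists s.
apply: (supported_cone vmK) => _ [s sF ->] uvs.
have sN y : y \in s -> ~~ E u y /\ ~~ E v y.
  move/(subsetP (ind_faces_sub sF)); rewrite inE => /andP [/notin_closedNbhEdge [_ _ ? ?] _].
  by [].
have vs : v \notin s by apply/negP => /sN []; rewrite Euv.
apply: (ind_faces_setU1 delEdge_sym delEdge_irr _ uS uvs).
  apply: (ind_faces_setU1 delEdge_sym delEdge_irr _ vS vs).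
    exact: ind_faces_subrel delEdge_sub (ind_facesS (subsetDl _ _) sF).
  by move=> y /sN [_]; apply: contra; apply: delEdge_sub.
move=> y /setU1P [-> | /sN [+ _]].
  by rewrite /delEdge Euv !eqxx.
by apply: contra; apply: delEdge_sub.
Qed.

Lemma nonbounding_cycle_delEdgeVlink S j z : nonbounding_cycle (indFace E S) j z ->
  nonbounding_cycle (indFace E' S) j z \/
  exists k l, j = k.+1 /\ nonbounding_cycle (indFace E (S :\: N)) k l.
Proof.
have [/andP [uS vS] | uvS] := boolP ((u \in S) && (v \in S)); last first.
  by move=> zK; left; apply/nonbounding_cycle_delEdgeE.
move=> [zK bz nb].
have [[c cK bc] | nbc'] := classic (is_boundary (indFace E' S) j z); last first.
  left; split => //; apply: (supported_sub zK) => s; exact: ind_faces_subrel delEdge_sub.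
set l := uv_part c; have lK := uv_part_supported cK.
have bl : bdry l = 0 by rewrite -uv_part_bdry bc (uv_part_ind zK).
have [[m mK bm] | nm] := classic (exists2 m, chain_on (indFace E (S :\: N)) j m & bdry m = l).
  have [mu mv] := avoids_uv_link mK.
  case: nb; exists (c - cone u (cone v l) + (cone u m - cone v m)).
    exact: supportedD (chain_on_delEdge_uv_free cK) (chain_on_cone_uv uS vS mK).
  rewrite -bm (cone2_bdry neq_uv mu mv) opprD (addrA c) subrK raddfB /= bdry_bdry subr0.
  exact: bc.
right; case: j {zK nb cK} lK nm => [|k] lK nm.
  have l0 : l = 0 by apply: (supported_eq0 lK) => s [].
  by case: nm; exists 0; [apply: supported0 | rewrite l0 raddf0].
exists k, l; split => //; split => //.
by move=> s /lK [sF [->]].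
Qed.

Lemma nonbounding_cycle_of_delEdgeVlink S j z : nonbounding_cycle (indFace E' S) j z ->
  (exists z', nonbounding_cycle (indFace E S) j z') \/
  exists k l, j = k.+2 /\ nonbounding_cycle (indFace E (S :\: N)) k l.
Proof.
have [/andP [uS vS] | uvS] := boolP ((u \in S) && (v \in S)); last first.
  by move=> zK; left; exists z; apply/nonbounding_cycle_delEdgeE.
move=> [zK bz nb]; set l := uv_part z; have lK := uv_part_supported zK.
have z0K := chain_on_delEdge_uv_free zK.
have bl : bdry l = 0 by rewrite -uv_part_bdry bz /l /uv_part !raddf0.
have nbE : ~ is_boundary (indFace E S) j z.
  move=> [c cK bc]; apply: nb; exists c => //.
  by apply: (supported_sub cK) => s; exact: ind_faces_subrel delEdge_sub.
case: j zK bz nb lK z0K nbE => [|n] zK bz nb lK z0K nbE.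
  have l0 : l = 0 by apply: (supported_eq0 lK) => s [].
  by left; exists z; split => //; rewrite -[z]subr0 -(raddf0 (cone u)) -(raddf0 (cone v)) -l0.
have [[m mK bm] | nm] := classic (exists2 m, chain_on (indFace E (S :\: N)) n m & bdry m = l).
  have [mu mv] := avoids_uv_link mK.
  have ez : z - cone u (cone v l) + (cone u m - cone v m) = z - bdry (cone u (cone v m)).
    by rewrite -bm (cone2_bdry neq_uv mu mv) opprD (addrA z) subrK.
  left; exists (z - cone u (cone v l) + (cone u m - cone v m)); split.
  - exact: supportedD z0K (chain_on_cone_uv uS vS mK).
  - by rewrite ez raddfB /= bz bdry_bdry subr0.
  move=> [c cK bc]; apply: nb; exists (c + cone u (cone v m)).
    apply: supportedD (chain_on_cone2_uv uS vS mK).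
    by apply: (supported_sub cK) => s; exact: ind_faces_subrel delEdge_sub.
  by rewrite raddfD /= bc ez subrK.
right; case: n {zK nb z0K nbE} lK nm => [|k] lK nm.
  have l0 : l = 0 by apply: (supported_eq0 lK) => s [].
  by case: nm; exists 0; [apply: supported0 | rewrite l0 raddf0].
exists k, l; split => //; split => //.
by move=> s /lK [sF [->]].
Qed.

Section IsolatedVertex.
Context {w x : T}.
Hypotheses (wN : w \notin N) (wnbrs : forall y, E w y -> y \in N).
Hypotheses (Ewx : E w x) (degx : degree E x = 2%N).

Lemma nbrs_x : exists2 a, a \in [set u; v] & [set y | E x y] = [set w; a].
Proof.
have [wu wv nuw nvw] := notin_closedNbhEdge wN.
suff [a auv xa] : exists2 a, a \in [set u; v] & E x a.
  exists a => //; apply: degree2_nbrs => //; first by rewrite Esym.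
  by case/set2P: auv => ->.
move: (wnbrs x Ewx); rewrite inE => /or4P [/eqP xu | /eqP xv | uxE | vxE].
- by move: Ewx; rewrite xu Esym (negbTE nuw).
- by move: Ewx; rewrite xv Esym (negbTE nvw).
- by exists u; rewrite ?inE ?eqxx // Esym.
- by exists v; rewrite ?inE ?eqxx ?orbT // Esym.
Qed.

Lemma neq_wx : w != x.
Proof. by apply: contraTneq Ewx => ->; rewrite Eirr. Qed.

Lemma reg_leq_delEdge : (reg F E <= reg F E')%N.
Proof.
apply: leq_reg => S j z /nonbounding_cycle_delEdgeVlink [zK | [k [l [-> lK]]]].
  by exists S, z.
have [a auv xnbrs] := nbrs_x.
have wiso y : y \in S :\: N -> ~~ E w y.
  by rewrite inE => /andP [yN _]; apply: contra yN; apply: wnbrs.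
have wSN : w \notin S :\: N.
  by apply/negP => wSN; apply: (isolated_no_nonbounding_cycle Esym Eirr wSN wiso lK).
have xSN : x \notin S :\: N by rewrite inE (wnbrs x Ewx).
have aSN : a \notin S :\: N.
  by rewrite inE negb_and negbK; case/set2P: auv => ->; rewrite inE eqxx ?orbT.
have xiso := nbrs2_notin xnbrs wSN aSN.
exists (w |: (x |: (S :\: N))), (cone w l - cone x l).
have [wu _ nuw _] := notin_closedNbhEdge wN.
have xu : x != u by apply: contraTneq Ewx => ->; rewrite Esym (negbTE nuw).
have uvR : ~~ ((u \in w |: (x |: (S :\: N))) && (v \in w |: (x |: (S :\: N)))).
  by rewrite !inE (eq_sym u w) (negbTE wu) (eq_sym u x) (negbTE xu) eqxx.
apply/(nonbounding_cycle_delEdgeE uvR).2.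
exact: (nonbounding_cycle_suspension Esym Eirr lK wSN xSN neq_wx Ewx wiso xiso).
Qed.

Lemma delEdge_wE y : E' w y = E w y.
Proof.
have [wu wv _ _] := notin_closedNbhEdge wN.
by apply: delEdgeE; rewrite (negbTE wu) (negbTE wv).
Qed.

Lemma nonbounding_cycle_of_delEdge_w {S j z} : w \in S ->
  nonbounding_cycle (indFace E' S) j z -> exists z', nonbounding_cycle (indFace E S) j z'.
Proof.
move=> wS /nonbounding_cycle_of_delEdgeVlink [// | [k [l [_ lK]]]].
have wSN : w \in S :\: N by rewrite inE wN.
case: (isolated_no_nonbounding_cycle Esym Eirr wSN _ lK) => y.
by rewrite inE => /andP [yN _]; apply: contra yN; apply: wnbrs.
Qed.

Lemma nonbounding_cycle_of_delEdge_off_w {S j z} : w \notin S -> x \notin S ->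
  (forall y, y \in S -> ~~ E w y) -> nonbounding_cycle (indFace E' S) j z ->
  exists R z', nonbounding_cycle (indFace E R) j z'.
Proof.
move=> wS xS wiso zK; have [a auv xnbrs] := nbrs_x.
have uvR R : a \notin R -> ~~ ((u \in R) && (v \in R)).
  by case/set2P: auv => -> /negbTE ->; rewrite ?andbF.
have [aS | aS] := boolP (a \in S); last first.
  by exists S, z; apply/(nonbounding_cycle_delEdgeE (uvR _ aS)).
have [[z' z'K] | [k [r [-> rK]]]] :=
  nonbounding_cycle_setD1Vlink delEdge_sym delEdge_irr aS zK.
  by exists (S :\ a), z'; apply/(nonbounding_cycle_delEdgeE (uvR _ (negbT (setD11 a S)))).
set R := S :\ a :\: [set y | E' a y] in rK.
have aR : a \notin R by rewrite !inE eqxx andbF.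
have RS y : y \in R -> y \in S by rewrite !inE => /and3P [].
have wR : w \notin R by apply: contra wS => /RS.
exists (w |: (x |: R)), (cone w r - cone x r).
apply: (nonbounding_cycle_suspension Esym Eirr _ wR _ neq_wx Ewx).
- exact: (nonbounding_cycle_delEdgeE (uvR _ aR)).1 rK.
- by apply: contra xS => /RS.
- by move=> y /RS; apply: wiso.
- exact: nbrs2_notin xnbrs wR aR.
Qed.

Lemma reg_delEdge_leq : (reg F E' <= reg F E)%N.
Proof.
apply: leq_reg => S j z zK; have [wS | wS] := boolP (w \in S).
  by have [z' ?] := nonbounding_cycle_of_delEdge_w wS zK; exists S, z'.
have [zK' | [q qK]] := nonbounding_cycle_setU1Vlink wS zK.
  by have [z' ?] := nonbounding_cycle_of_delEdge_w (setU11 w S) zK'; exists (w |: S), z'.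
apply: (nonbounding_cycle_of_delEdge_off_w _ _ _ qK).
- by rewrite !inE (negbTE wS) andbF.
- by rewrite !inE delEdge_wE Ewx.
- by move=> y; rewrite !inE delEdge_wE => /andP [].
Qed.

End IsolatedVertex.

End EdgeDeletion.

End Chains.

Local Close Scope ring_scope.

Theorem mainTheorem13 (F : fieldType) (T : finType) (E : rel T)
  (Esym : symmetric E) (Eirr : irreflexive E) (u v w x : T) :
  E u v ->
  w \notin closedNbhEdge E u v ->
  (forall y, E w y -> y \in closedNbhEdge E u v) ->
  E w x -> degree E x = 2 ->
  reg F E = reg F (delEdge E u v).
Proof.
move=> Euv wN wnbrs Ewx degx; apply/eqP; rewrite eqn_leq.
rewrite (reg_leq_delEdge F Esym Eirr Euv wN wnbrs Ewx degx).
exact: (reg_delEdge_leq F Esym Eirr Euv wN wnbrs Ewx degx).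
Qed.
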